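(* Let $R$ be an integral domain satisfying (R$_1$) whose integral closure $R'$ is a generalized Krull domain, and such that $P \cap R$ is a height one prime of $R$ for every height one prime $P$ of $R'$. If some maximal ideal of $R$ contains all height one primes of $R$, then $R$ is local.
   Context: ''Local'' means having a unique maximal ideal. A ring satisfies (R$_1$) if its localization at every height one prime is a valuation domain. A domain $A$ is a generalized Krull domain if (1) $A = \bigcap A_{\mathfrak{p}}$ over all height one primes $\mathfrak{p}$ of $A$, (2) every nonzero element lies in only finitely many height one primes, and (3) $A$ satisfies (R$_1$). *)

(* Domains are modelled as subrings of a fixed field K that is
   their field of fractions; ideals are Prop-valued subsets of K contained in
   the subring. *)
From HB Require Import structures.
From mathcomp Require Import all_boot all_order all_algebra.
Set Implicit Arguments. Unset Strict Implicit. Unset Printing Implicit Defensive.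
Import GRing.Theory.
Local Open Scope ring_scope.

Section CommAlg.
Variable K : fieldType.
Implicit Types (A I P Q M N : K -> Prop).

Definition is_ideal A I : Prop :=
  (forall x, I x -> A x) /\ I 0 /\
  (forall x y, I x -> I y -> I (x + y)) /\
  (forall a x, A a -> I x -> I (a * x)).

Definition is_prime A P : Prop :=
  is_ideal A P /\ ~ P 1 /\
  (forall x y, A x -> A y -> P (x * y) -> P x \/ P y).

Definition nonzero_set P : Prop := exists x, P x /\ x <> 0.

Definition height_one A P : Prop :=
  is_prime A P /\ nonzero_set P /\
  (forall Q, is_prime A Q -> nonzero_set Q -> (forall x, Q x -> P x) ->
     forall x, P x -> Q x).

Definition is_maximal A M : Prop :=
  is_ideal A M /\ ~ M 1 /\
  (forall I, is_ideal A I -> (forall x, M x -> I x) ->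
     (forall x, I x -> M x) \/ I 1).

Definition is_local A : Prop :=
  exists M, is_maximal A M /\
    forall N, is_maximal A N -> forall x, N x <-> M x.

Definition localization A P : K -> Prop :=
  fun x => exists a b, A a /\ A b /\ ~ P b /\ x = a / b.

Definition valuation_domain_in V : Prop :=
  forall x : K, x <> 0 -> V x \/ V x^-1.

Definition cond_R1 A : Prop :=
  forall P, height_one A P -> valuation_domain_in (localization A P).

Definition generalized_Krull A : Prop :=
  (forall x, (forall P, height_one A P -> localization A P x) -> A x) /\
  (forall x, A x -> x <> 0 ->
     exists (n : nat) (F : nat -> K -> Prop),
       forall P, height_one A P -> P x ->
         exists i, (i < n)%N /\ forall y, P y <-> F i y) /\
  cond_R1 A.

Definition integral_closure A : K -> Prop :=
  fun x => exists p : {poly K},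
    p \is monic /\ (forall i, A p`_i) /\ root p x.

End CommAlg.

Definition dom_in_frac (R : idomainType) : {fraction R} -> Prop :=
  fun x => exists r : R, x = (@FracField.tofrac R r).
Arguments dom_in_frac R _ : clear implicits.

(* Let N be a maximal ideal of R and 0 <> x in N.  Then x^-1 is not in R, and
   since an integral x^-1 would lie in R[x] = R, x^-1 is not in R' either.  As
   R' is the intersection of its localizations at height one primes, x^-1 lies
   outside some R'_P, which forces x in P; then x lies in the height one prime
   P /\ R of R and hence in M.  So N is contained in M, and
   N = M by maximality. *)
From HB Require Import structures.
From mathcomp Require Import all_boot all_order all_algebra.
From Stdlib Require Import Classical.
Set Implicit Arguments. Unset Strict Implicit. Unset Printing Implicit Defensive.
Local Open Scope ring_scope.
Import GRing.Theory.

Definition subring_pred (K : fieldType) (A : K -> Prop) : Prop :=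
  [/\ A 1, forall a b, A a -> A b -> A (a - b) & forall a b, A a -> A b -> A (a * b)].

Lemma dom_in_frac_subring (R : idomainType) : subring_pred (dom_in_frac R).
Proof.
split; first by exists 1; rewrite rmorph1.
  by move=> _ _ [r ->] [s ->]; exists (r - s); rewrite rmorphB.
by move=> _ _ [r ->] [s ->]; exists (r * s); rewrite rmorphM.
Qed.

Section IdealsOfSubring.
Variables (K : fieldType) (A : K -> Prop).

Lemma localization_inv P x : A 1 -> A x -> ~ P x -> localization A P x^-1.
Proof. by move=> A1 Ax nPx; exists 1, x; rewrite div1r. Qed.

Lemma maximal_inv_notin N x : is_maximal A N -> N x -> x != 0 -> ~ A x^-1.
Proof.
move=> [[_ [_ [_ NM]]] [N1 _]] Nx nx Ax'.
by apply: N1; rewrite -(mulVf nx); apply: NM.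
Qed.

Lemma maximal_eq N M : is_maximal A N -> is_maximal A M ->
  (forall x, N x -> M x) -> forall x, N x <-> M x.
Proof.
move=> [_ [_ maxN]] [idM [M1 _]] NM x; split; first exact: NM.
by case: (maxN M idM NM) => [MN | //]; apply: MN.
Qed.

End IdealsOfSubring.

Section Subring.
Variables (K : fieldType) (A : K -> Prop).
Hypothesis subA : subring_pred A.

Lemma subring1 : A 1. Proof. by case: subA. Qed.

Lemma subringB a b : A a -> A b -> A (a - b).
Proof. by case: subA => _ AB _; apply: AB. Qed.

Lemma subringM a b : A a -> A b -> A (a * b).
Proof. by case: subA => _ _ AM; apply: AM. Qed.

Lemma subring0 : A 0.
Proof. by rewrite -(subrr 1); apply: subringB; apply: subring1. Qed.

Lemma subringN a : A a -> A (- a).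
Proof. by move=> Aa; rewrite -sub0r; apply: subringB => //; apply: subring0. Qed.

Lemma subringD a b : A a -> A b -> A (a + b).
Proof. by move=> Aa Ab; rewrite -[b]opprK; apply: subringB => //; apply: subringN. Qed.

Lemma subringX a n : A a -> A (a ^+ n).
Proof.
move=> Aa; elim: n => [|n IH]; first by rewrite expr0; apply: subring1.
by rewrite exprS; apply: subringM.
Qed.

Lemma subring_sub_integral_closure x : A x -> integral_closure A x.
Proof.
move=> Ax; exists ('X - x%:P); split; first exact: monicXsubC.
split; last by rewrite /root hornerXsubC subrr.
move=> i; rewrite coefB coefX coefC.
case: i => [|[|i]] /=; apply: subringB => //;
  by [exact: subring0 | exact: subring1].
Qed.

(* If y = x^-1 is a root of the monic p of degree m+1, multiplying p(y) = 0 by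
   x^m writes y as a polynomial in x with coefficients in A. *)
Lemma integral_inv_subring x :
  A x -> x != 0 -> integral_closure A x^-1 -> A x^-1.
Proof.
move=> Ax nx [p [mp [Ap rp]]].
have [m sz_p] : exists m, size p = m.+2.
  case: (ltnP 1 (size p)) => sz; first by exists (size p).-2; case: (size p) sz => [|[|]].
  move: mp rp; rewrite (size1_polyC sz) monicE lead_coefC /root hornerC => /eqP ->.
  by rewrite oner_eq0.
have lead1 : p`_m.+1 = 1 by move: mp; rewrite monicE /lead_coef sz_p => /eqP.
move: rp; rewrite /root horner_coef sz_p big_ord_recr /= lead1 mul1r => /eqP.
move=> /(congr1 (fun z => z * x ^+ m)); rewrite mul0r mulrDl exprS -mulrA.
rewrite -exprMn mulVf // expr1n mulr1 => /eqP; rewrite addrC addr_eq0 => /eqP ->.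
rewrite mulr_suml; apply/subringN/(big_ind A) => [||i _]; first exact: subring0.
  exact: subringD.
have inv_pow k : (k <= m)%N -> x^-1 ^+ k * x ^+ m = x ^+ (m - k).
  move=> le_km; rewrite -{1}(subnK le_km) exprD mulrCA -exprMn mulVf //.
  by rewrite expr1n mulr1.
rewrite -mulrA inv_pow; last by rewrite -ltnS.
by apply: subringM; [apply: Ap | apply: subringX].
Qed.

Lemma exists_height_one_of_inv_notin x :
  (forall y, (forall P, height_one (integral_closure A) P ->
                localization (integral_closure A) P y) -> integral_closure A y) ->
  A x -> x != 0 -> ~ A x^-1 ->
  exists P, height_one (integral_closure A) P /\ P x.
Proof.
move=> cap_loc Ax nx nAx'; apply: NNPP => noP.
apply/nAx'/integral_inv_subring/cap_loc => // P P1.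
apply: localization_inv; [exact/subring_sub_integral_closure/subring1 |
  exact: subring_sub_integral_closure | by move=> Px; apply: noP; exists P].
Qed.

End Subring.

Theorem lemma4p1 (R : idomainType) :
  cond_R1 (dom_in_frac R) ->
  generalized_Krull (integral_closure (dom_in_frac R)) ->
  (forall P, height_one (integral_closure (dom_in_frac R)) P ->
     height_one (dom_in_frac R) (fun x => P x /\ dom_in_frac R x)) ->
  (exists M, is_maximal (dom_in_frac R) M /\
     forall P, height_one (dom_in_frac R) P -> forall x, P x -> M x) ->
  is_local (dom_in_frac R).
Proof.
move=> _ [cap_loc _] contract_ht1 [M [maxM ht1_sub_M]].
have subR := dom_in_frac_subring R.
exists M; split=> // N maxN; apply: (maximal_eq maxN maxM) => x Nx.
have Rx : dom_in_frac R x by case: maxN => [[NR _] _]; apply: NR.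
have [-> | nx] := eqVneq x 0; first by case: maxM => [[_ [M0 _]] _].
have [P [P1 Px]] := exists_height_one_of_inv_notin subR cap_loc Rx nx
  (maximal_inv_notin maxN Nx nx).
exact: ht1_sub_M (contract_ht1 P P1) x (conj Px Rx).
Qed.
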